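(* Let $\nu$ be a signature. The subspace $H_\nu\subset\mathfrak H_\nu$ is invariant under the operators $\mathfrak r_\nu(\mathcal A)$ for all $\mathcal A\in\widetilde{\mathrm{Hinge}}_n$.
   Context: Let $V=\mathbb C^n$ with basis $e_1,\dots,e_n$. A signature is a tuple of integers $\nu_1\ge\dots\ge\nu_n\ge0$; put $\nu_{n+1}=0$, $\mathfrak H_\nu=\bigotimes_{j=1}^n(\Lambda^jV)^{\otimes(\nu_j-\nu_{j+1})}$, $\Xi_\nu=\bigotimes_j(e_1\wedge\dots\wedge e_j)^{\otimes(\nu_j-\nu_{j+1})}$. For $\mathcal A=(A_0,\dots,A_n)$ with $A_j\in\mathrm{Mat}(\Lambda^jV)$, $\mathfrak r_\nu(\mathcal A)=\bigotimes_jA_j^{\otimes(\nu_j-\nu_{j+1})}$. With $\lambda^j_{\mathrm{cha}}(g)v_1\wedge\dots\wedge v_j=gv_1\wedge\dots\wedge gv_j$, $H_\nu$ is the linear span of the vectors $\mathfrak r_\nu(\lambda^0_{\mathrm{cha}}(g),\dots,\lambda^n_{\mathrm{cha}}(g))\Xi_\nu$, $g\in\mathrm{GL}_n(\mathbb C)$. A linear relation is a subspace $P\subset V\oplus V$; $\mathrm{Ker}\,P=\{v: v\oplus0\in P\}$, $\mathrm{Dom}\,P,\mathrm{Im}\,P$ the projections to the first and second summands, $\mathrm{Indef}\,P=\{w:0\oplus w\in P\}$, $\mathrm{rk}\,P=\dim\mathrm{Dom}\,P-\dim\mathrm{Ker}\,P$. If $\dim P=n$, choose bases $f_1,\dots,f_a,g_1,\dots,g_b,h_1,\dots,h_c$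 and $F_1,\dots,F_a,G_1,\dots,G_b,H_1,\dots,H_c$ of $V$ with $P$ spanned by $0\oplus F_i$, $g_j\oplus G_j$, $h_k\oplus0$; $\lambda(P)$ maps $f_1\wedge\dots\wedge f_a\wedge g_{i_1}\wedge\dots\wedge g_{i_s}$ to $F_1\wedge\dots\wedge F_a\wedge G_{i_1}\wedge\dots\wedge G_{i_s}$ and kills the other basis monomials (up to scalar); $\lambda^m(P)$ its restriction to $\Lambda^mV$. A hinge is a sequence $\mathcal P=(P_1,\dots,P_k)$ of $n$-dimensional relations with $\mathrm{Ker}\,P_j=\mathrm{Dom}\,P_{j+1}$, $\mathrm{Im}\,P_j=\mathrm{Indef}\,P_{j+1}$, $\mathrm{Dom}\,P_1=V$, $\mathrm{Im}\,P_k=V$, $\mathrm{rk}\,P_j>0$. For each $m$ there is a nonzero $\lambda^m(P_j)$, and any two nonzero ones are proportional; $\lambda^m(\mathcal P)$ denotes it (up to scalar). $\widetilde{\mathrm{Hinge}}_n$ is the set of tuples $(c_0\lambda^0(\mathcal P),\dots,c_n\lambda^n(\mathcal P))$ with $\mathcal P$ a hinge and $c_j\in\mathbb C$. *)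

From HB Require Import structures.
From mathcomp Require Import all_boot all_order all_algebra.
From mathcomp Require Import reals.
From mathcomp.real_closed Require Import complex.
Unset Printing Implicit Defensive.
Import Order.TTheory GRing.Theory Num.Theory.
Local Open Scope ring_scope.

Section Defs.
Variables (K : fieldType) (n : nat).

(* ---------- exterior algebra Lambda V, V = K^n, basis e_S, S : {set 'I_n} ----
   e_S = e_{s_1} /\ ... /\ e_{s_k} with s_1 < ... < s_k (enum S is increasing).
   A vector of Lambda V is given by its coordinates {set 'I_n} -> K; Lambda^m V
   is spanned by the e_S with #|S| = m.                                       *)

(* coordinates (on the basis e_S) of the wedge  b_{u_1} /\ ... /\ b_{u_k},
   u_1 < ... < u_k the elements of U, where b_i is the i-th row of B
   (b_i = \sum_k B i k e_k):  the coefficient of e_S is the minor B[U,S]. *)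
Definition wedge (B : 'M[K]_n) (U : {set 'I_n}) (S : {set 'I_n}) : K :=
  if #|S| == #|U| then
    \det (\matrix_(i < #|U|, j < #|U|)
            B (enum_val i) (nth (enum_val i) (enum S) j))
  else 0.

(* lambda_cha(g) on Lambda V, as a matrix on the basis e_S:
   entry (S, T) = coefficient of e_S in g e_{t_1} /\ ... /\ g e_{t_k}
   (g e_t is the t-th column of g, i.e. the t-th row of g^T). *)
Definition lambda_cha (g : 'M[K]_n) (S T : {set 'I_n}) : K := wedge g^T T S.

(* ---------- signatures and the tensor space frak H_nu ----------
   nu = [:: nu_1; ...; nu_n], nu_{n+1} = 0 (= nth 0 nu n). *)
Definition signature (nu : seq nat) : Prop :=
  size nu = n /\ sorted geq nu.

Definition nuj (nu : seq nat) (j : nat) : nat := nth 0%N nu j.-1.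

(* list of the degrees of the tensor factors of frak H_nu, in order:
   degree j (1 <= j <= n) repeated nu_j - nu_{j+1} times *)
Definition degs (nu : seq nat) : seq nat :=
  flatten [seq nseq (nuj nu j - nuj nu j.+1) j | j <- iota 1 n].

(* basis of frak H_nu: tuples (S_t)_t of subsets with #|S_t| = degree of factor t *)
Definition TIdx (nu : seq nat) : finType :=
  {I : {ffun 'I_(size (degs nu)) -> {set 'I_n}} |
     [forall t, #|I t| == nth 0%N (degs nu) t]}.

(* a tuple A = (A_0, ..., A_n), A_m in Mat(Lambda^m V), given as
   A m S T for #|S| = #|T| = m (other entries are irrelevant). *)
Definition MatTuple := nat -> {set 'I_n} -> {set 'I_n} -> K.

Definition rnu (nu : seq nat) (A : MatTuple) (x : TIdx nu -> K) : TIdx nu -> K :=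
  fun I => \sum_(J : TIdx nu)
            (\prod_(t < size (degs nu))
               A (nth 0%N (degs nu) t) (val I t) (val J t)) * x J.

(* Xi_nu = tensor product of the e_1 /\ ... /\ e_j *)
Definition Xi (nu : seq nat) : TIdx nu -> K :=
  fun I => if [forall t, val I t == [set i : 'I_n | (i < nth 0%N (degs nu) t)%N]]
           then 1 else 0.

Definition Hgen (nu : seq nat) (g : 'M[K]_n) : TIdx nu -> K :=
  rnu nu (fun _ => lambda_cha g) (Xi nu).

Definition inH (nu : seq nat) (x : TIdx nu -> K) : Prop :=
  exists (m : nat) (gs : 'I_m -> 'M[K]_n) (cs : 'I_m -> K),
    (forall i, gs i \in unitmx) /\
    forall I, x I = \sum_(i < m) cs i * Hgen nu (gs i) I.

(* ---------- linear relations ----------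
   A linear relation P in V (+) V is the row space of P : 'M_(n+n); a row
   vector of K^(n+n) is v (+) w = row_mx v w. *)
Definition relDom (P : 'M[K]_(n + n)) : 'M[K]_(n + n, n) := lsubmx P.
Definition relIm (P : 'M[K]_(n + n)) : 'M[K]_(n + n, n) := rsubmx P.
Definition relKer (P : 'M[K]_(n + n)) : 'M[K]_(n + n, n) :=
  kermx (rsubmx P) *m lsubmx P.
Definition relIndef (P : 'M[K]_(n + n)) : 'M[K]_(n + n, n) :=
  kermx (lsubmx P) *m rsubmx P.
Definition relrk (P : 'M[K]_(n + n)) : nat :=
  (\rank (relDom P) - \rank (relKer P))%N.

(* the monomials b_U kept by lambda(P): U = {f_1..f_a} u (subset of g's),
   with the basis ordered f_1..f_a, g_1..g_b, h_1..h_c *)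
Definition keptU (a b : nat) (U : {set 'I_n}) : bool :=
  [forall i : 'I_n, ((i < a)%N ==> (i \in U)) && ((i \in U) ==> (i < a + b)%N)].

(* L (a matrix on Lambda V in the basis e_S) is a lambda(P) for some
   admissible choice of bases f,g,h (rows of B) and F,G,H (rows of B'). *)
Definition is_lambda (P : 'M[K]_(n + n)) (L : {set 'I_n} -> {set 'I_n} -> K) : Prop :=
  exists (a b c : nat) (B B' : 'M[K]_n),
    [/\ (a + b + c)%N = n, B \in unitmx, B' \in unitmx,
        (P == \matrix_(i < n)
                 row_mx (if (i < a)%N then 0 else row i B)
                        (if (a + b <= i)%N then 0 else row i B'))%MS &
        forall (U S : {set 'I_n}),
          \sum_(T : {set 'I_n}) L S T * wedge B U T =
          (if keptU a b U then wedge B' U S else 0)].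

Definition relj (Ps : seq 'M[K]_(n + n)) (j : nat) : 'M[K]_(n + n) := nth 0 Ps j.

Definition hinge (Ps : seq 'M[K]_(n + n)) : Prop :=
  [/\ (0 < size Ps)%N,
      forall j, (j < size Ps)%N ->
        \rank (relj Ps j) = n /\ (0 < relrk (relj Ps j))%N,
      forall j, (j.+1 < size Ps)%N ->
        (relKer (relj Ps j) == relDom (relj Ps j.+1))%MS /\
        (relIm (relj Ps j) == relIndef (relj Ps j.+1))%MS,
      row_full (relDom (relj Ps 0)) &
      row_full (relIm (relj Ps (size Ps).-1))].

Definition nonzero_deg (m : nat) (L : {set 'I_n} -> {set 'I_n} -> K) : Prop :=
  exists S T : {set 'I_n}, [/\ #|S| = m, #|T| = m & L S T != 0].

(* tilde Hinge_n : tuples (c_0 lambda^0(P), ..., c_n lambda^n(P)); lambda^m(P)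
   is a nonzero lambda^m(P_j) for some j (all such are proportional). *)
Definition inHingeT (A : MatTuple) : Prop :=
  exists Ps : seq 'M[K]_(n + n), hinge Ps /\
    forall m : nat, (m <= n)%N ->
      exists (c : K) (j : nat) (L : {set 'I_n} -> {set 'I_n} -> K),
        [/\ (j < size Ps)%N, is_lambda (relj Ps j) L, nonzero_deg m L &
            forall S T : {set 'I_n}, #|S| = m -> #|T| = m -> A m S T = c * L S T].

End Defs.

(* Each generator r_nu(lambda(g)) Xi_nu of H_nu is a tensor product of the
   decomposable vectors g e_1 /\ ... /\ g e_d, i.e. of the Pluecker vectors of
   the spans X_d of the first d columns of g.  Writing lambda^d(P) in bases
   adapted to P and expanding by Cauchy-Binet, one sees that it maps the
   Pluecker vector of a d-dimensional space X either to 0 or to a multiple of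
   the Pluecker vector of the image Y = P(X), which then has dimension d: once
   the coordinates of X are row-reduced on the f-part of the basis, the minors
   kept by lambda(P) are exactly the minors of a single d x n matrix.
   For a hinge these images are nested: if two of them come from the same
   relation, monotonicity of the image gives Y_d <= Y_d'; if they come from
   P_j and P_j' with j < j', then Y_d <= Im P_j <= Indef P_j' <= Y_d'.  A chain
   of subspaces of dimensions d extends to a full flag, so every Y_d is spanned
   by the first d columns of one invertible u, and r_nu(A) maps the generator
   for g to a multiple of the generator for u. *)

From HB Require Import structures.
From mathcomp Require Import all_boot all_order all_algebra.
From mathcomp Require Import reals.
From mathcomp.real_closed Require Import complex.
From mathcomp Require Import perm zify.
Import GRing.Theory Num.Theory.
Local Open Scope ring_scope.

Set Implicit Arguments.
Unset Strict Implicit.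
Unset Printing Implicit Defensive.

Section MatrixFacts.
Variable K : fieldType.

Lemma det_mulmx_expand d p (M : 'M[K]_(d, p)) (N : 'M[K]_(p, d)) :
  \det (M *m N) =
  \sum_(f : ('I_p ^ d)%type) (\prod_i M i (f i)) * \det (rowsub f N).
Proof.
transitivity (\sum_(s : 'S_d) \sum_(f : ('I_p ^ d)%type)
   (-1) ^+ s * ((\prod_i M i (f i)) * \prod_i N (f i) (s i))).
  apply: eq_bigr => s _; rewrite -big_distrr /=; congr (_ * _).
  under [RHS]eq_bigr do rewrite -big_split /=.
  rewrite -(bigA_distr_bigA (fun i k => M i k * N k (s i))) /=.
  by apply: eq_bigr => i _; rewrite mxE.
rewrite exchange_big /=; apply: eq_bigr => f _.
rewrite big_distrr /=; apply: eq_bigr => s _.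
rewrite mulrCA; congr (_ * (_ * _)).
by apply: eq_bigr => i _; rewrite mxE.
Qed.

Lemma det_rowsub_noninj d p (N : 'M[K]_(p, d)) (f : 'I_d -> 'I_p) :
  ~~ injectiveb f -> \det (rowsub f N) = 0.
Proof.
case/injectivePn => i1 [i2 Di12 Ef12].
by rewrite (determinant_alternate Di12) // => j; rewrite !mxE Ef12.
Qed.

Lemma pid_mulmxE m q r (A : 'M[K]_(m, q)) i k :
  (pid_mx r *m A) i k = if (i < r)%N then A i k else 0.
Proof.
rewrite mxE (bigD1 i) //= big1 ?addr0 => [|j ji]; rewrite !mxE.
  by rewrite eqxx; case: ifP; rewrite ?mul1r ?mul0r.
by rewrite (_ : (i == j :> nat) = false) ?mul0r //; apply/negbTE; rewrite eq_sym.
Qed.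

Lemma mulmx_pidE m q r (A : 'M[K]_(m, q)) i k :
  (A *m pid_mx r) i k = if (k < r)%N then A i k else 0.
Proof.
rewrite mxE (bigD1 k) //= big1 ?addr0 => [|j jk]; rewrite !mxE.
  by rewrite eqxx; case: ifP; rewrite ?mulr1 ?mulr0.
by rewrite (_ : (j == k :> nat) = false) ?mulr0 //; apply/negbTE.
Qed.

Lemma copid_mulmxE m q r (A : 'M[K]_(m, q)) i k :
  (copid_mx r *m A) i k = if (i < r)%N then 0 else A i k.
Proof.
rewrite mulmxBl mul1mx mxE [X in _ + X]mxE pid_mulmxE.
by case: ifP; rewrite ?subrr ?subr0.
Qed.

Lemma row_pid_mulmx m q r (A : 'M[K]_(m, q)) i :
  row i (pid_mx r *m A) = if (i < r)%N then row i A else 0.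
Proof.
by apply/rowP => k; rewrite [LHS]mxE pid_mulmxE; case: ifP => _; rewrite !mxE.
Qed.

Lemma det_row0 d (N : 'M[K]_d) i : (forall j, N i j = 0) -> \det N = 0.
Proof. by move=> h; rewrite (expand_det_row _ i) big1 // => j _; rewrite h mul0r. Qed.

Lemma det_col0 d (N : 'M[K]_d) j : (forall i, N i j = 0) -> \det N = 0.
Proof. by move=> h; rewrite -det_tr (det_row0 (i := j)) // => i; rewrite mxE h. Qed.

Lemma det_rank_lt d (N : 'M[K]_d) : (\rank N < d)%N -> \det N = 0.
Proof.
move=> h; apply/eqP; apply: contraTT h => hN.
by rewrite mxrank_unit ?ltnn // unitmxE unitfE.
Qed.

(* Column operations with the unit columns, i.e. right multiplication by a
   unitriangular matrix, clear the upper right block. *)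
Lemma det_unit_cols d a (N : 'M[K]_d) :
  (forall i j : 'I_d, (j < a)%N -> N i j = (i == j)%:R) ->
  \det N = \det (\matrix_(i, j) (if (j < a)%N || (a <= i)%N then N i j else 0)).
Proof.
move=> hN; set N' := \matrix_(i, j) _.
pose T : 'M[K]_d :=
  1%:M + \matrix_(i, j) (if (i < a)%N && (a <= j)%N then N i j else 0).
have -> : N = N' *m T.
  apply/matrixP => i k; rewrite mulmxDr mulmx1 !mxE.
  under eq_bigr do rewrite !mxE.
  case: (ltnP k a) => ka /=.
    by rewrite big1 ?addr0 // => l _; rewrite andbF mulr0.
  have -> : \sum_(l < d) (if (l < a)%N || (a <= i)%N then N i l else 0) *
       (if (l < a)%N && true then N l k else 0) = if (i < a)%N then N i k else 0.
    case: (ltnP i a) => ia.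
      rewrite (bigD1 i) //= ia hN // eqxx mul1r big1 ?addr0 // => l li.
      rewrite orbF andbT; case: ifP => la; last by rewrite mul0r.
      by rewrite hN // (_ : (i == l) = false) ?mul0r //; apply/negbTE; rewrite eq_sym.
    rewrite big1 // => l _; case: ifP => la; last by rewrite mul0r.
    rewrite orbT andbT in la *; case: ifP => la'; last by rewrite mulr0.
    rewrite hN // (_ : (i == l) = false) ?mul0r //.
    by apply/negbTE; apply: contraTneq la' => <-; rewrite -leqNgt.
  by case: (ltnP i a) => ia; rewrite ?orbF ?orbT ?add0r ?addr0.
rewrite det_mulmx; suff -> : \det T = 1 by rewrite mulr1.
rewrite -det_tr det_trig; last first.
  apply/forallP => i; apply/forallP => j; apply/implyP => ij; rewrite !mxE.
  rewrite (_ : (j == i) = false); last by apply/negbTE; rewrite neq_ltn ij orbT.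
  case: ifP => [/andP [ja ai]|_]; last by rewrite addr0.
  by move: (leq_ltn_trans ai (ltn_trans ij ja)); rewrite ltnn.
rewrite big1 // => i _; rewrite !mxE eqxx.
case: ifP => [/andP [ia ai]|_]; last by rewrite addr0.
by move: (leq_ltn_trans ai ia); rewrite ltnn.
Qed.

Lemma eqmx_set_zero_row n (R : 'M[K]_n) (v : 'rV[K]_n) k (kn : (k < n)%N) :
  row (Ordinal kn) R = 0 ->
  (\matrix_(i < n) (if (i : nat) == k then v else row i R) :=: R + v)%MS.
Proof.
move=> Rk0; set R' := \matrix_(i < n) _.
have rowR' i : row i R' = if (i : nat) == k then v else row i R by rewrite rowK.
apply/eqmxP/andP; split.
  apply/row_subP => i; rewrite rowR'; case: ifP => _; first exact: addsmxSr.
  exact: submx_trans (row_sub _ _) (addsmxSl _ _).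
rewrite addsmx_sub; apply/andP; split.
  apply/row_subP => i; have [ik|ik] := eqVneq (i : nat) k.
    by rewrite (_ : i = Ordinal kn) ?Rk0 ?sub0mx //; apply: val_inj.
  by rewrite (_ : row i R = row i R') ?row_sub // rowR' (negPf ik).
by rewrite (_ : v = row (Ordinal kn) R') ?row_sub // rowR' eqxx.
Qed.

Lemma exists_ker_pid d n a (M : 'M[K]_(d, n)) :
  (a <= n)%N -> (\rank (M *m (pid_mx a : 'M_n)) < a)%N ->
  exists2 v : 'rV[K]_n, v != 0 & v *m (pid_mx a : 'M_n) = v /\ v *m M^T = 0.
Proof.
move=> an rMa; set T := (pid_mx a : 'M_n) *m M^T.
have rT : (\rank T < a)%N by rewrite /T -(tr_pid_mx K n n a) -trmx_mul mxrank_tr.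
have : ~~ (kermx T <= kermx (pid_mx a : 'M[K]_n))%MS.
  apply/negP => /mxrankS; rewrite !mxrank_ker rank_pid_mx //.
  by move: rT an; lia.
case/row_subPn => i; set v := row i (kermx T) => vnker.
have vT : v *m T = 0 by rewrite /v -row_mul mulmx_ker row0.
exists (v *m pid_mx a); first by rewrite -sub_kermx.
split; first by rewrite -mulmxA pid_mx_id.
by rewrite -mulmxA.
Qed.

Lemma normalize_pid d n a (M : 'M[K]_(d, n)) :
  (a <= n)%N -> \rank (M *m (pid_mx a : 'M_n)) = a ->
  exists2 Q : 'M[K]_d, Q \in unitmx & Q *m M *m (pid_mx a : 'M_n) = pid_mx a.
Proof.
move=> an rA; have ad : (a <= d)%N by rewrite -rA rank_leq_row.
set A0 := M *m _ in rA *; set E := (pid_mx a : 'M[K]_(d, n)).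
have A0E : (A0 <= E)%MS.
  by rewrite /A0 -(pid_mx_id K n (n := d) n ad) mulmxA submxMl.
have /submxP [Lam ELam] : (E <= A0)%MS.
  by case/mxrank_leqif_sup: A0E => _; rewrite rA rank_pid_mx // eqxx => <-.
set Q := (pid_mx a : 'M[K]_d) *m Lam + kermx A0.
have QA : Q *m A0 = E by rewrite mulmxDl mulmx_ker addr0 -mulmxA -ELam pid_mx_id.
exists Q; last by rewrite -mulmxA.
rewrite -row_free_unit -kermx_eq0; apply/eqP/row_matrixP => i; rewrite row0.
set mu := row i (kermx Q).
have muQ : mu *m Q = 0 by rewrite /mu -row_mul mulmx_ker row0.
have mup : mu *m (pid_mx a : 'M[K]_d) = 0.
  by rewrite -(pid_mx_id K d (n := n) d an) mulmxA -/E -QA mulmxA muQ !mul0mx.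
(* [kermx A0] is [copid_mx (\rank A0)] times an invertible matrix *)
move: muQ; rewrite /Q mulmxDr mulmxA mup mul0mx add0r /kermx rA mulmxA.
have -> : mu *m copid_mx a = mu by rewrite /copid_mx mulmxBr mulmx1 mup subr0.
by move=> h; rewrite -(mulmxKV (col_ebase_unit A0) mu) h mul0mx.
Qed.

End MatrixFacts.

Definition prefix_set n d : {set 'I_n} := [set i : 'I_n | (i < d)%N].

Lemma card_prefix_set n d : (d <= n)%N -> #|prefix_set n d| = d.
Proof.
move=> dn; have -> : prefix_set n d = [set widen_ord dn j | j in 'I_d].
  apply/setP => i; rewrite inE; apply/idP/imsetP => [id | [j _ ->]] /=.
    by exists (Ordinal id) => //; apply: val_inj.
  by rewrite ltn_ord.
by rewrite card_imset ?card_ord // => i j /(congr1 val) /= e; apply: val_inj.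
Qed.

Section Selections.
Variables (K : fieldType) (n : nat) (x0 : 'I_n).

Definition enum_at (U : {set 'I_n}) (j : nat) : 'I_n := nth x0 (enum U) j.

Lemma enum_at_mem (U : {set 'I_n}) j : (j < #|U|)%N -> enum_at U j \in U.
Proof. by move=> h; rewrite /enum_at -mem_enum mem_nth // -cardE. Qed.

Lemma enum_at_inj (U : {set 'I_n}) i j : (i < #|U|)%N -> (j < #|U|)%N ->
  enum_at U i = enum_at U j -> i = j.
Proof.
move=> hi hj e; apply/eqP; rewrite -(nth_uniq x0 _ _ (enum_uniq U)) ?e -?cardE //.
by apply/eqP.
Qed.

Lemma enum_at_index (U : {set 'I_n}) k :
  k \in U -> exists2 j, (j < #|U|)%N & enum_at U j = k.
Proof.
move=> kU; exists (index k (enum U)); first by rewrite cardE index_mem mem_enum.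
by rewrite /enum_at nth_index // mem_enum.
Qed.

Lemma big_enum_at (U : {set 'I_n}) d (F : 'I_n -> K) : #|U| = d ->
  \sum_(j < d) F (enum_at U j) = \sum_(k in U) F k.
Proof.
move=> hd; transitivity (\sum_(k <- enum U) F k); last exact: big_enum.
by rewrite (big_nth x0) -cardE hd big_mkord.
Qed.

Lemma enum_at_prefix (U : {set 'I_n}) a :
  (a <= n)%N -> (forall k : 'I_n, (k < a)%N -> k \in U) ->
  forall j, (j < #|U|)%N ->
    ((j < a)%N -> val (enum_at U j) = j) /\ ((a <= j)%N -> (a <= enum_at U j)%N).
Proof.
move=> an hU j jU.
pose p (m : nat) := (m < n)%N && (insubd x0 m \in U).
have e : map val (enum U) = iota 0 a ++ filter p (iota a (n - a)).
  rewrite {1}/enum_mem -enumT.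
  rewrite (@eq_filter _ _ (preim val p)); last first.
    move=> x /=; rewrite /p ltn_ord /=.
    by congr (_ \in U); apply: val_inj; rewrite insubdK // unfold_in /= ltn_ord.
  rewrite -filter_map val_enum_ord -{1}(subnKC an) iotaD filter_cat add0n.
  congr (_ ++ _); apply/all_filterP/allP => k; rewrite mem_iota add0n /= => ka.
  have kn : (k < n)%N by apply: leq_trans ka an.
  by rewrite /p kn (_ : insubd x0 k = Ordinal kn) ?hU //; apply: val_inj; rewrite insubdK.
have jsz : (j < size (enum U))%N by rewrite -cardE.
have ev : nat_of_ord (nth x0 (enum U) j) = nth (val x0) (map val (enum U)) j.
  by rewrite (nth_map x0).
rewrite /enum_at /= ev e nth_cat size_iota.
split => ja; first by rewrite ja nth_iota.
rewrite ltnNge ja /=.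
have : nth (val x0) (filter p (iota a (n - a))) (j - a) \in filter p (iota a (n - a)).
  apply: mem_nth; move: jsz; rewrite -(size_map val) e size_cat size_iota.
  by rewrite -{1}(subnKC ja) ltn_add2l.
by rewrite mem_filter mem_iota => /andP [_ /andP [] ].
Qed.

Definition colsel d (U : {set 'I_n}) m (M : 'M[K]_(m, n)) : 'M[K]_(m, d) :=
  colsub (fun j : 'I_d => enum_at U j) M.

Definition rowsel d (U : {set 'I_n}) p (C : 'M[K]_(n, p)) : 'M[K]_(d, p) :=
  rowsub (fun i : 'I_d => enum_at U i) C.

Lemma det_colsel_dependent d (M : 'M[K]_(d, n)) (U : {set 'I_n}) (v : 'rV[K]_n) :
  #|U| = d -> v != 0 -> v *m M^T = 0 -> (forall k, k \notin U -> v 0 k = 0) ->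
  \det (colsel d U M) = 0.
Proof.
move=> hU v0 vM vU; apply/eqP; rewrite -det_tr; apply/det0P.
exists (\row_(j < d) v 0 (enum_at U j)).
  apply: contraNneq v0 => /rowP mu0; apply/eqP/rowP => k; rewrite mxE.
  have [kU|/vU -> //] := boolP (k \in U).
  have [j jU <-] := enum_at_index kU.
  have jd : (j < d)%N by rewrite -hU.
  by have := mu0 (Ordinal jd); rewrite !mxE.
apply/rowP => i; rewrite !mxE.
under eq_bigr do rewrite !mxE.
rewrite (big_enum_at (fun k => v 0 k * M i k) hU).
transitivity ((v *m M^T) 0 i); last by rewrite vM mxE.
rewrite mxE [RHS](bigID (mem U)) /= [X in _ + X]big1 ?addr0 => [|k kU]; last first.
  by rewrite vU ?mul0r.
by apply: eq_bigr => k _; rewrite mxE.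
Qed.

Section CauchyBinet.
Variables (d : nat) (M : 'M[K]_(d, n)) (N : 'M[K]_(n, d)).

Lemma det_colsel_rowsel (U : {set 'I_n}) : #|U| = d ->
  \det (colsel d U M) * \det (rowsel d U N) =
  \sum_(f : ('I_n ^ d)%type | injectiveb f && ([set f i | i in 'I_d] == U))
     (\prod_i M i (f i)) * \det (rowsub f N).
Proof.
move=> hU; rewrite -det_mulmx det_mulmx_expand.
pose h (g : ('I_d ^ d)%type) : ('I_n ^ d)%type := [ffun i => enum_at U (g i)].
have ltd (g : ('I_d ^ d)%type) i : (g i < #|U|)%N by rewrite hU.
have injh g : injectiveb (h g) = injectiveb g.
  apply/injectiveP/injectiveP => ig i j e.
    by apply: ig; rewrite /h !ffunE e.
  apply: ig; apply: val_inj; apply: (enum_at_inj (ltd g i) (ltd g j)).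
  by move: e; rewrite /h !ffunE.
rewrite (bigID (fun g : ('I_d ^ d)%type => injectiveb g)) /= [X in _ + X]big1.
  2: by move=> g /det_rowsub_noninj ->; rewrite mulr0.
rewrite addr0 (reindex h) /=.
  apply: eq_big => [g|g _]; last first.
    congr (_ * _); first by apply: eq_bigr => i _; rewrite !mxE ffunE.
    by congr (\det _); apply/matrixP => i j; rewrite !mxE ffunE.
  rewrite injh; case ig: (injectiveb g) => //=.
  apply/esym/eqP/setP => k; apply/imsetP/idP => [[i _ ->]|kU].
    by rewrite ffunE enum_at_mem.
  have [j jlt <-] := enum_at_index kU.
  have jd : (j < d)%N by rewrite -hU.
  have [gi _ gK] := injF_bij (injectiveP _ ig).
  by exists (gi (Ordinal jd)) => //; rewrite ffunE gK.
exists (fun f : ('I_n ^ d)%type =>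
          [ffun i : 'I_d => insubd i (index (f i) (enum U))]).
  move=> g _; apply/ffunP => i; rewrite /h !ffunE.
  apply: val_inj; rewrite insubdK /enum_at ?index_uniq ?enum_uniq -?cardE //.
  by rewrite unfold_in /=.
move=> f; rewrite inE /= => /andP [_ /eqP fU]; apply/ffunP => i; rewrite /h !ffunE.
have fiU : f i \in U by rewrite -fU; apply/imsetP; exists i.
rewrite insubdK /enum_at ?nth_index ?mem_enum //.
by rewrite unfold_in /= (leq_trans _ (eq_leq hU)) // cardE index_mem mem_enum.
Qed.

Lemma det_mulmx_cauchy_binet :
  \det (M *m N) = \sum_(U : {set 'I_n} | #|U| == d)
      \det (colsel d U M) * \det (rowsel d U N).
Proof.
rewrite det_mulmx_expand (bigID (fun f : ('I_n ^ d)%type => injectiveb f)) /=.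
rewrite [X in _ + X]big1 ?addr0; last first.
  by move=> f /det_rowsub_noninj ->; rewrite mulr0.
rewrite (partition_big (fun f : ('I_n ^ d)%type => [set f i | i in 'I_d])
   (fun U => #|U| == d)) /=; last first.
  by move=> f /injectiveP inj; rewrite card_imset // card_ord.
by apply: eq_bigr => U /eqP hU; rewrite det_colsel_rowsel.
Qed.

End CauchyBinet.

Lemma rowsel_prefix_sub d d' (B : 'M[K]_n) :
  (d <= d' <= n)%N ->
  (rowsel d (prefix_set n d) B <= rowsel d' (prefix_set n d') B)%MS.
Proof.
case/andP=> dd' d'n; have dn := leq_trans dd' d'n.
apply/row_subP => i; set k := enum_at (prefix_set n d) i.
have kd : k \in prefix_set n d by apply: enum_at_mem; rewrite card_prefix_set.
have kd' : k \in prefix_set n d'.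
  by move: kd; rewrite !inE => /leq_trans; apply.
have [j jlt e] := enum_at_index kd'.
have jd : (j < d')%N by rewrite -(card_prefix_set d'n).
rewrite (_ : row i _ = row (Ordinal jd) (rowsel d' (prefix_set n d') B)) ?row_sub //.
by apply/rowP => l; rewrite !mxE /= e.
Qed.

Lemma pid_rowsel_prefix d (U : 'M[K]_n) : (d <= n)%N ->
  ((pid_mx d : 'M_n) *m U <= rowsel d (prefix_set n d) U)%MS.
Proof.
move=> dn; apply/row_subP => i; rewrite row_pid_mulmx.
case: ifP => id; last by rewrite sub0mx.
have iT : i \in prefix_set n d by rewrite inE.
have [j jlt e] := enum_at_index iT.
have jd : (j < d)%N by rewrite -(card_prefix_set dn).
rewrite (_ : row i U = row (Ordinal jd) (rowsel d (prefix_set n d) U)) ?row_sub //.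
by apply/rowP => k; rewrite !mxE /= e.
Qed.

End Selections.

Section Plucker.
Variables (K : fieldType) (n : nat) (x0 : 'I_n).
Local Notation enum_at := (enum_at x0).
Local Notation colsel := (colsel x0).
Local Notation rowsel := (rowsel x0).

(* The coefficient of [e_S] in the wedge product of the rows of [X]. *)
Definition plucker d (X : 'M[K]_(d, n)) (S : {set 'I_n}) : K :=
  if #|S| == d then \det (colsel d S X) else 0.

Lemma wedge_plucker (B : 'M[K]_n) (U : {set 'I_n}) d S : #|U| = d ->
  wedge K n B U S = plucker (rowsel d U B) S.
Proof.
move=> <-; rewrite /wedge /plucker; case: eqP => // hS.
congr (\det _); apply/matrixP => i j; rewrite !mxE (enum_val_nth x0) /enum_at.
by rewrite (set_nth_default x0 (nth x0 (enum U) i)) // -cardE hS.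
Qed.

Lemma plucker_mull d (Q : 'M[K]_d) (X : 'M[K]_(d, n)) S :
  plucker (Q *m X) S = \det Q * plucker X S.
Proof.
by rewrite /plucker /colsel; case: eqP => _; rewrite ?mulr0 // -mulmx_colsub det_mulmx.
Qed.

Lemma plucker_rank_lt d (X : 'M[K]_(d, n)) S : (\rank X < d)%N -> plucker X S = 0.
Proof.
move=> h; rewrite /plucker; case: eqP => // _; apply: det_rank_lt.
rewrite /colsel -[X]mulmx1 -mulmx_colsub.
exact: leq_ltn_trans (mxrankM_maxl _ _) h.
Qed.

Lemma plucker_cauchy_binet d (M : 'M[K]_(d, n)) (C : 'M[K]_n) S :
  plucker (M *m C) S = \sum_(U : {set 'I_n} | #|U| == d)
      \det (colsel d U M) * plucker (rowsel d U C) S.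
Proof.
rewrite /plucker; case: eqP => _; last by rewrite big1 // => U _; rewrite mulr0.
rewrite /colsel -mulmx_colsub (det_mulmx_cauchy_binet x0).
by apply: eq_bigr => U _; congr (_ * \det _); apply/matrixP => i j; rewrite !mxE.
Qed.

End Plucker.

Section RelationalImage.
Variables (K : fieldType) (n : nat).

Definition relimg_le m (P : 'M[K]_(m, n + n)) d e
    (X : 'M[K]_(d, n)) (Y : 'M[K]_(e, n)) : Prop :=
  forall w y : 'rV[K]_n, (w <= X)%MS -> (row_mx w y <= P)%MS -> (y <= Y)%MS.

Definition le_relimg m (P : 'M[K]_(m, n + n)) d e
    (X : 'M[K]_(d, n)) (Y : 'M[K]_(e, n)) : Prop :=
  forall i, exists2 w : 'rV[K]_n, (w <= X)%MS & (row_mx w (row i Y) <= P)%MS.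

End RelationalImage.

Section AdaptedBases.
Variables (K : fieldType) (n : nat) (x0 : 'I_n) (a b : nat) (C C' : 'M[K]_n).
Hypothesis abn : (a + b <= n)%N.
Local Notation colsel := (colsel x0).
Local Notation rowsel := (rowsel x0).
Local Notation plucker := (plucker x0).
Local Notation kept U := (keptU n a b U).

Let an : (a <= n)%N. Proof. exact: leq_trans (leq_addr b a) abn. Qed.

(* The relation of [is_lambda]: rows of [C] are the bases f, g, h and rows of
   [C'] the bases F, G, H; [kept U] says that [lambda(P)] keeps the monomial
   indexed by [U]. *)
Definition relmx : 'M[K]_(n, n + n) :=
  row_mx (copid_mx a *m C) (pid_mx (a + b) *m C').

Lemma relmxE :
  \matrix_(i < n) row_mx (if (i < a)%N then 0 else row i C)
                         (if (a + b <= i)%N then 0 else row i C') = relmx.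
Proof.
apply/row_matrixP => i; rewrite rowK row_row_mx; congr row_mx.
  by apply/rowP => k; rewrite [RHS]mxE copid_mulmxE; case: ifP => _; rewrite !mxE.
by apply/rowP => k; rewrite [RHS]mxE pid_mulmxE ltnNge; case: ifP => _; rewrite !mxE.
Qed.

Lemma keptUP (U : {set 'I_n}) :
  reflect ((forall k : 'I_n, (k < a)%N -> k \in U) /\
           (forall k : 'I_n, k \in U -> (k < a + b)%N)) (kept U).
Proof.
apply: (iffP forallP) => [h|[h1 h2] k]; last first.
  by apply/andP; split; apply/implyP; [apply: h1 | apply: h2].
by split=> k; have /andP [/implyP ? /implyP ?] := h k.
Qed.

Definition kept_sum d (M : 'M[K]_(d, n)) (S : {set 'I_n}) : K :=
  \sum_(U : {set 'I_n} | #|U| == d)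
     \det (colsel d U M) * (if kept U then plucker (rowsel d U C') S else 0).

Lemma lambda_kept_sum (L : {set 'I_n} -> {set 'I_n} -> K) d (M : 'M[K]_(d, n)) S :
  (forall U S, \sum_T L S T * wedge K n C U T =
               (if kept U then wedge K n C' U S else 0)) ->
  \sum_T L S T * plucker (M *m C) T = kept_sum M S.
Proof.
move=> Lspec; under eq_bigr do rewrite plucker_cauchy_binet big_distrr.
rewrite exchange_big /=; apply: eq_bigr => U /eqP hU.
transitivity (\det (colsel d U M) * \sum_T L S T * wedge K n C U T).
  rewrite big_distrr; apply: eq_bigr => T _.
  by rewrite (wedge_plucker x0 C T hU) mulrCA.
by rewrite Lspec (wedge_plucker x0 C' S hU).
Qed.

Lemma kept_sum_mull d (Q : 'M[K]_d) (M : 'M[K]_(d, n)) S :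
  kept_sum (Q *m M) S = \det Q * kept_sum M S.
Proof.
rewrite /kept_sum big_distrr /=; apply: eq_bigr => U _.
by rewrite mulrA /colsel -mulmx_colsub det_mulmx.
Qed.

Lemma kept_sum_degenerate d (M : 'M[K]_(d, n)) S :
  (\rank (M *m (pid_mx a : 'M_n)) < a)%N -> kept_sum M S = 0.
Proof.
case/(exists_ker_pid an) => v v0 [vpid vM].
rewrite /kept_sum big1 // => U /eqP hU; case: keptUP => [[preU _]|_]; last first.
  by rewrite mulr0.
rewrite (det_colsel_dependent x0 hU v0 vM) ?mul0r // => k kU.
rewrite -vpid mulmx_pidE; case: ifP => // ka.
by rewrite preU in kU.
Qed.

Definition kept_mx d (M : 'M[K]_(d, n)) : 'M[K]_(d, n) :=
  pid_mx a + copid_mx a *m M *m pid_mx (a + b).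

Section Normalized.
Variables (d : nat) (M : 'M[K]_(d, n)).
Hypotheses (ad : (a <= d)%N) (Mpid : M *m (pid_mx a : 'M_n) = pid_mx a).

Lemma normalized_unit_col i (k : 'I_n) : (k < a)%N -> M i k = (i == k :> nat)%:R.
Proof.
move=> ka; have := congr1 (fun A : 'M[K]_(d, n) => A i k) Mpid.
rewrite mulmx_pidE ka => ->; rewrite mxE.
by case: eqP => // ->; rewrite ka.
Qed.

Lemma kept_mxE i k : kept_mx M i k =
  if (k < a)%N then (i == k :> nat)%:R
  else if (a <= i)%N && (k < a + b)%N then M i k else 0.
Proof.
rewrite /kept_mx mxE [pid_mx a i k]mxE mulmx_pidE copid_mulmxE.
case: (ltnP k a) => ka.
  rewrite (leq_trans ka (leq_addr _ _)).
  case: (ltnP i a) => ia; first by rewrite andbT addr0.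
  by rewrite andbF add0r normalized_unit_col.
rewrite (_ : (i == k :> nat) && (i < a)%N = false) ?add0r; last first.
  by apply/negbTE/andP => [[/eqP e ia]]; move: ia; rewrite e ltnNge ka.
by case: (ltnP i a) => ia; case: ifP.
Qed.

Lemma det_colsel_kept_mx (U : {set 'I_n}) : #|U| = d ->
  \det (colsel d U (kept_mx M)) = if kept U then \det (colsel d U M) else 0.
Proof.
move=> hU; case: ifP => [/keptUP [preU subU] | /negbT]; last first.
  rewrite negb_forall => /existsP [k]; rewrite negb_and => /orP [|].
    rewrite negb_imply => /andP [ka kU].
    have kd : (k < d)%N by apply: leq_trans ka ad.
    apply: (det_row0 (i := Ordinal kd)) => j; rewrite mxE kept_mxE /=.
    have jU : enum_at x0 U j \in U by apply: enum_at_mem; rewrite hU.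
    case: ifP => _; last by rewrite leqNgt ka.
    case: eqP => // e; move: kU.
    by rewrite (_ : k = enum_at x0 U j) ?jU //; apply: val_inj.
  rewrite negb_imply -leqNgt => /andP [kU kab].
  have [j0 j0U e] := enum_at_index x0 kU.
  have j0d : (j0 < d)%N by rewrite -hU.
  apply: (det_col0 (j := Ordinal j0d)) => i; rewrite mxE kept_mxE /= e.
  by rewrite ltnNge (leq_trans (leq_addr _ _) kab) /= ltnNge kab andbF.
have prefix := enum_at_prefix x0 an preU.
rewrite [RHS](det_unit_cols (a := a)); last first.
  move=> i j ja; rewrite mxE.
  have jU : (j < #|U|)%N by rewrite hU.
  have [pre1 _] := prefix j jU.
  by rewrite normalized_unit_col pre1.
congr (\det _); apply/matrixP => i j; rewrite mxE kept_mxE !mxE.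
have jU : (j < #|U|)%N by rewrite hU.
have [pre1 pre2] := prefix j jU.
case: (ltnP j a) => ja; first by rewrite (pre1 ja) ja normalized_unit_col ?(pre1 ja).
by rewrite ltnNge pre2 //= subU ?enum_at_mem // andbT; case: ifP.
Qed.

Lemma kept_sum_kept_mx S : kept_sum M S = plucker (kept_mx M *m C') S.
Proof.
rewrite plucker_cauchy_binet; apply: eq_bigr => U /eqP hU.
by rewrite det_colsel_kept_mx //; case: ifP; rewrite ?mulr0 ?mul0r.
Qed.

Lemma relimg_le_kept_mx : C \in unitmx ->
  relimg_le relmx (M *m C) (kept_mx M *m C').
Proof.
move=> Cu w y /submxP [lam' ->] /submxP [lam].
rewrite mul_mx_row => /eq_row_mx [ew ->].
have lamM : lam' *m M = lam *m copid_mx a.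
  by apply: (can_inj (mulmxK Cu)); rewrite -!mulmxA.
have lamE : lam' *m (pid_mx a : 'M_(d, n)) = 0.
  by rewrite -Mpid mulmxA lamM -mulmxA mul_copid_mx_pid ?mulmx0.
have lamp : lam' *m (pid_mx a : 'M_d) = 0.
  by rewrite -(pid_mx_id K d (n := n) d an) mulmxA lamE mul0mx.
have lamc : lam' *m (copid_mx a : 'M_d) = lam'.
  by rewrite mulmxBr mulmx1 lamp subr0.
have pidab : (pid_mx a : 'M[K]_n) *m (pid_mx (a + b) : 'M_n) = pid_mx a.
  by rewrite mul_pid_mx (minn_idPl (leq_addr b a)) (minn_idPr an).
have t1 : lam *m (pid_mx a : 'M_(n, d)) *m (pid_mx a : 'M_(d, n)) =
    lam *m (pid_mx a : 'M_n) by rewrite -mulmxA pid_mx_id.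
have t2 : lam *m (pid_mx a : 'M_(n, d)) *m
    (copid_mx a *m M *m (pid_mx (a + b) : 'M_n)) = 0.
  by rewrite -!mulmxA (mulmxA (pid_mx a)) mul_pid_mx_copid // mul0mx mulmx0.
have t3 : lam' *m (copid_mx a *m M *m (pid_mx (a + b) : 'M_n)) =
    lam *m copid_mx a *m pid_mx (a + b) by rewrite !mulmxA lamc lamM.
apply/submxP; exists (lam *m (pid_mx a : 'M_(n, d)) + lam').
rewrite mulmxA [RHS]mulmxA; congr (_ *m C').
rewrite /kept_mx mulmxDr (mulmxDl _ lam' (pid_mx a)) (mulmxDl _ lam' (_ *m _ *m _)).
rewrite t1 t2 lamE t3 addr0 add0r.
by rewrite -mulmxA mulmxBl mul1mx pidab mulmxBr addrC subrK.
Qed.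

Lemma le_relimg_kept_mx : le_relimg relmx (M *m C) (kept_mx M *m C').
Proof.
pose Z := (pid_mx a : 'M[K]_(d, n)) + copid_mx a *m M.
have ZE : Z *m relmx = row_mx (copid_mx a *m M *m C) (kept_mx M *m C').
  rewrite /relmx mul_mx_row; congr row_mx; rewrite !mulmxA mulmxDl.
    congr (_ *m C).
    rewrite mulmxBr mulmx1 pid_mx_id // subrr add0r.
    by rewrite mulmxBr mulmx1 -mulmxA Mpid mul_copid_mx_pid // subr0.
  congr (_ *m C'); rewrite /kept_mx mul_pid_mx.
  by rewrite (minn_idPl (leq_addr b a)) (minn_idPr an).
move=> i; exists (row i (copid_mx a *m M *m C)).
  by apply: submx_trans (row_sub _ _) _; rewrite -!mulmxA submxMl.
by rewrite -row_row_mx -ZE row_mul submxMl.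
Qed.

End Normalized.

End AdaptedBases.

Section LambdaPlucker.
Variables (K : fieldType) (n : nat) (x0 : 'I_n).
Local Notation plucker := (plucker x0).

Lemma lambda_plucker (P : 'M[K]_(n + n)) (L : {set 'I_n} -> {set 'I_n} -> K)
    d (X : 'M[K]_(d, n)) :
  is_lambda K n P L ->
  (forall S, \sum_T L S T * plucker X T = 0) \/
  exists k (Y : 'M[K]_(d, n)),
    [/\ forall S, \sum_T L S T * plucker X T = k * plucker Y S,
        \rank Y = d, relimg_le P X Y & le_relimg P X Y].
Proof.
case=> a [b [c [C [C' [habc Cu _ /eqmxP PE Lspec]]]]].
have abn : (a + b <= n)%N by rewrite -habc leq_addr.
have an : (a <= n)%N by apply: leq_trans (leq_addr b a) abn.
rewrite relmxE in PE.
set M := X *m invmx C; have XM : X = M *m C by rewrite mulmxKV.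
have sumE S : \sum_T L S T * plucker X T = kept_sum x0 a b C' M S.
  by rewrite XM (lambda_kept_sum x0 _ _ Lspec).
have [rlt|rge] := ltnP (\rank (M *m (pid_mx a : 'M_n))) a.
  by left => S; rewrite sumE kept_sum_degenerate.
have rA : \rank (M *m (pid_mx a : 'M_n)) = a.
  apply/eqP; rewrite eqn_leq rge andbT.
  by apply: leq_trans (mxrankM_maxr _ _) _; rewrite rank_pid_mx.
have ad : (a <= d)%N by rewrite -rA rank_leq_row.
have [Q Qu QMpid] := normalize_pid an rA.
set Y := kept_mx a b (Q *m M) *m C'.
have sumY S : \sum_T L S T * plucker X T = (\det Q)^-1 * plucker Y S.
  rewrite sumE -[M in kept_sum _ _ _ _ M](mulKmx Qu) kept_sum_mull det_inv.
  by rewrite (kept_sum_kept_mx x0 C' abn ad QMpid).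
have XE : (Q *m M *m C :=: X)%MS.
  by rewrite -mulmxA -XM; apply: eqmxMfull; rewrite row_full_unit.
have [rYlt|rYge] := ltnP (\rank Y) d.
  by left => S; rewrite sumY plucker_rank_lt ?mulr0.
right; exists (\det Q)^-1, Y; split => //.
- by apply/eqP; rewrite eqn_leq rank_leq_row.
- move=> w y; rewrite -XE PE; exact: relimg_le_kept_mx.
- move=> i; have [w wX wP] := le_relimg_kept_mx C C' abn ad QMpid i.
  by exists w; rewrite -?XE ?PE.
Qed.

End LambdaPlucker.

Section Flag.
Variables (K : fieldType) (n : nat) (E : nat -> 'M[K]_n) (D : pred nat).
Hypotheses (rankE : forall d, D d -> \rank (E d) = d)
           (nestE : forall d d', D d -> D d' -> (d < d')%N -> (E d <= E d')%MS).

Let leq_n d : D d -> (d <= n)%N.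
Proof. by move=> Dd; rewrite -(rankE Dd) rank_leq_col. Qed.

Definition partial_flag (k : nat) (R : 'M[K]_n) : Prop :=
  [/\ \rank R = k, (forall i : 'I_n, (k <= i)%N -> row i R = 0),
      (forall d, D d -> (d <= k)%N -> (E d <= (pid_mx d : 'M_n) *m R)%MS) &
      (forall d, D d -> (k < d)%N -> (R <= E d)%MS)].

Lemma partial_flag0 : partial_flag 0 0.
Proof.
split=> [||d Dd|d _ _]; rewrite ?mxrank0 ?sub0mx //; first by move=> i _; rewrite row0.
rewrite leqn0 => /eqP d0.
suff /eqP -> : E d == 0 by rewrite sub0mx.
by rewrite -mxrank_eq0 rankE // d0.
Qed.

Lemma exists_next_flag_vector k (R : 'M[K]_n) : (k < n)%N -> \rank R = k ->
  (forall d, D d -> (k < d)%N -> (R <= E d)%MS) ->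
  exists2 v : 'rV[K]_n, ~~ (v <= R)%MS & forall d, D d -> (k < d)%N -> (v <= E d)%MS.
Proof.
move=> kn rR RE.
have [/existsP [d0 /andP [Dd0 kd0]]|noD] := boolP [exists d : 'I_n.+1, D d && (k < d)%N].
  have exm : exists m, D m && (k < m)%N by exists d0; rewrite Dd0.
  case: (ex_minnP exm) => m /andP [Dm km] mmin.
  have /row_subPn [r hr] : ~~ (E m <= R)%MS.
    by apply/negP => /mxrankS; rewrite rankE // rR; move: km; lia.
  exists (row r (E m)) => // d Dd kd.
  apply: submx_trans (row_sub _ _) _.
  have := mmin d; rewrite Dd kd => /(_ isT); rewrite leq_eqVlt => /orP [/eqP->//|md].
  exact: nestE.
have /row_subPn [r hr] : ~~ ((1%:M : 'M[K]_n) <= R)%MS.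
  by apply/negP => /mxrankS; rewrite mxrank1 rR; move: kn; lia.
exists (row r 1%:M) => // d Dd kd.
case/negP: noD; apply/existsP; exists (Ordinal (leq_n Dd : (d < n.+1)%N)).
by rewrite /= Dd kd.
Qed.

Lemma partial_flagS k (R : 'M[K]_n) : (k < n)%N -> partial_flag k R ->
  exists R', partial_flag k.+1 R'.
Proof.
move=> kn [rR Rzero RsubE ERsub].
have [v vR vE] := exists_next_flag_vector kn rR ERsub.
pose R' : 'M[K]_n := \matrix_i (if (i : nat) == k then v else row i R).
have rowR' i : row i R' = if (i : nat) == k then v else row i R by rewrite rowK.
have R'E : (R' :=: R + v)%MS by apply: eqmx_set_zero_row; rewrite Rzero.
have rR' : \rank R' = k.+1.
  apply/eqP; rewrite R'E eqn_leq; apply/andP; split.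
    apply: leq_trans (mxrank_adds_leqif R v).1 _.
    by rewrite rR rank_rV; case: (v != 0) => /=; lia.
  rewrite -rR; apply: rank_ltmx; rewrite ltmxE addsmxSl /= addsmx_sub.
  by rewrite negb_and vR orbT.
have R'sub d : D d -> (k < d)%N -> (R' <= E d)%MS.
  by move=> Dd kd; rewrite R'E addsmx_sub ERsub ?vE.
exists R'; split => //.
- move=> i ki; rewrite rowR' ifF ?Rzero //; first exact: ltnW.
  by apply/negbTE; rewrite neq_ltn ki orbT.
- move=> d Dd; rewrite leq_eqVlt => /orP [/eqP dk|dk].
    have -> : (pid_mx d : 'M_n) *m R' = R'.
      apply/row_matrixP => i; rewrite row_pid_mulmx; case: ifP => // id.
      by rewrite rowR' ifF ?Rzero //; move/negbT: id; rewrite dk -leqNgt => id; lia.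
    have /mxrank_leqif_sup [_] := R'sub d Dd (leq_trans (ltnSn k) (eq_leq (esym dk))).
    by rewrite rR' rankE // dk eqxx => <-.
  have -> : (pid_mx d : 'M_n) *m R' = pid_mx d *m R.
    apply/row_matrixP => i; rewrite !row_pid_mulmx; case: ifP => // id.
    rewrite rowR' ifF //; apply/negbTE; apply: contraTneq id => ->.
    by rewrite -leqNgt -ltnS.
  exact: RsubE.
- by move=> d Dd kd; apply: R'sub => //; apply: ltnW.
Qed.

Lemma exists_flag_basis : exists2 U : 'M[K]_n, U \in unitmx &
  forall d, D d -> (E d <= (pid_mx d : 'M_n) *m U)%MS.
Proof.
suff [R [rR _ RsubE _]] : exists R, partial_flag n R.
  by exists R => [|d Dd]; [rewrite -row_free_unit /row_free rR | exact: RsubE (leq_n Dd)].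
suff : forall k, (k <= n)%N -> exists R, partial_flag k R by apply.
elim=> [_|k IH kn]; first by exists 0; exact: partial_flag0.
by have [R hR] := IH (ltnW kn); exact: partial_flagS kn hR.
Qed.

End Flag.

Lemma mem_degs n nu d : d \in degs n nu -> (0 < d <= n)%N.
Proof.
case/flattenP => s /mapP [j]; rewrite mem_iota => /andP [j1 jn] ->.
by rewrite mem_nseq => /andP [_ /eqP ->]; move: j1 jn; lia.
Qed.

Section TensorFactors.
Variables (K : fieldType) (n : nat) (nu : seq nat).
Local Notation s := (size (degs n nu)).
Local Notation dg t := (nth 0%N (degs n nu) t).

Lemma dg_bound (t : 'I_s) : (0 < dg t <= n)%N.
Proof. by apply: mem_degs; apply: mem_nth. Qed.

Lemma sum_TIdx_prod (H : 'I_s -> {set 'I_n} -> K) :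
  (forall (t : 'I_s) (T : {set 'I_n}), #|T| != dg t -> H t T = 0) ->
  \sum_(J : TIdx n nu) \prod_t H t (val J t) = \prod_t \sum_T H t T.
Proof.
move=> H0; rewrite bigA_distr_bigA /=.
rewrite (bigID (fun f : {ffun 'I_s -> {set 'I_n}} => [forall t, #|f t| == dg t])) /=.
rewrite [X in _ = _ + X]big1 ?addr0; last first.
  by move=> f; rewrite negb_forall => /existsP [t ht]; rewrite (bigD1 t) //= H0 // mul0r.
by rewrite [RHS]big_sub.
Qed.

Lemma rnu_prod (A : MatTuple K n) (w : 'I_s -> {set 'I_n} -> K) (x : TIdx n nu -> K) :
  (forall (t : 'I_s) (T : {set 'I_n}), #|T| != dg t -> w t T = 0) ->
  (forall J, x J = \prod_t w t (val J t)) ->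
  forall I, rnu K n nu A x I = \prod_(t < s) \sum_T A (dg t) (val I t) T * w t T.
Proof.
move=> w0 xE I; rewrite /rnu.
under eq_bigr do rewrite xE -big_split /=.
rewrite -(@sum_TIdx_prod (fun t T => A (dg t) (val I t) T * w t T)) //.
by move=> t T hT; rewrite w0 // mulr0.
Qed.

Lemma Hgen_prod g I :
  Hgen K n nu g I = \prod_(t < s) wedge K n g^T (prefix_set n (dg t)) (val I t).
Proof.
rewrite /Hgen (@rnu_prod _ (fun t T => (T == prefix_set n (dg t))%:R)).
- apply: eq_bigr => t _; rewrite (bigD1 (prefix_set n (dg t))) //= eqxx mulr1.
  by rewrite big1 ?addr0 // => T /negPf ->; rewrite mulr0.
- move=> t T hT; rewrite (_ : (T == _) = false) //; apply/negbTE.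
  by apply: contra hT => /eqP ->; rewrite card_prefix_set //; case/andP: (dg_bound t).
- move=> J; rewrite /Xi; case: ifP => [/forallP h|/negbT].
    by rewrite big1 // => t _; rewrite (h t).
  by rewrite negb_forall => /existsP [t ht]; rewrite (bigD1 t) //= (negPf ht) mul0r.
Qed.

Lemma rnu_Hgen A g I :
  rnu K n nu A (Hgen K n nu g) I =
  \prod_(t < s) \sum_T A (dg t) (val I t) T * wedge K n g^T (prefix_set n (dg t)) T.
Proof.
apply: rnu_prod => [t T hT|J]; last exact: Hgen_prod.
rewrite /wedge ifF //; apply/negbTE; rewrite card_prefix_set //.
by case/andP: (dg_bound t).
Qed.

End TensorFactors.

Section Hinges.
Variables (K : fieldType) (n : nat).
Implicit Types (P : 'M[K]_(n + n)) (Ps : seq 'M[K]_(n + n)).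

Lemma relIm_sub P (w y : 'rV[K]_n) : (row_mx w y <= P)%MS -> (y <= relIm K n P)%MS.
Proof.
case/submxP => l e; apply/submxP; exists l.
by move: e; rewrite -{1}[P]hsubmxK mul_mx_row => /eq_row_mx [_ ->].
Qed.

Lemma relIndef_sub P (y : 'rV[K]_n) :
  (y <= relIndef K n P)%MS -> (row_mx 0 y <= P)%MS.
Proof.
case/submxP => l ->; apply/submxP; exists (l *m kermx (lsubmx P)).
transitivity (l *m kermx (lsubmx P) *m row_mx (lsubmx P) (rsubmx P)).
  by rewrite mul_mx_row -mulmxA mulmx_ker mulmx0 mulmxA.
by rewrite hsubmxK.
Qed.

Lemma hinge_Im_Indef Ps : hinge K n Ps ->
  forall j j', (j < j')%N -> (j' < size Ps)%N ->
  (relIm K n (relj K n Ps j) <= relIndef K n (relj K n Ps j'))%MS.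
Proof.
case=> _ _ link _ _ j j' jj'; rewrite -(subnKC jj').
elim: (j' - j.+1)%N => [|k IH] hs.
  by rewrite addn0 in hs *; case: (link j hs) => _ /andP [].
rewrite addnS in hs *.
apply: submx_trans (IH (ltnW hs)) _; apply: submx_trans (submxMl _ _) _.
by case: (link _ hs) => _ /andP [].
Qed.

Lemma le_relimg_relIm P d e (X : 'M[K]_(d, n)) (Y : 'M[K]_(e, n)) :
  le_relimg P X Y -> (Y <= relIm K n P)%MS.
Proof. by move=> h; apply/row_subP => i; case: (h i) => w _; apply: relIm_sub. Qed.

Lemma relimg_le_relIndef P d e (X : 'M[K]_(d, n)) (Y : 'M[K]_(e, n)) :
  relimg_le P X Y -> (relIndef K n P <= Y)%MS.
Proof.
move=> h; apply/row_subP => i; apply: (h 0); first by rewrite sub0mx.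
by apply: relIndef_sub; apply: row_sub.
Qed.

Lemma hinge_relimg_nested Ps j j' d d' e e' (X : 'M[K]_(d, n)) (X' : 'M[K]_(d', n))
    (Y : 'M[K]_(e, n)) (Y' : 'M[K]_(e', n)) :
  hinge K n Ps -> (j < size Ps)%N -> (j' < size Ps)%N ->
  (X <= X')%MS -> (\rank Y < \rank Y')%N ->
  relimg_le (relj K n Ps j) X Y -> le_relimg (relj K n Ps j) X Y ->
  relimg_le (relj K n Ps j') X' Y' -> le_relimg (relj K n Ps j') X' Y' ->
  (Y <= Y')%MS.
Proof.
move=> hP jP j'P XX' rYY' imY leY imY' leY'.
case: (ltngtP j j') => [jj'|j'j|jj']; last subst j'.
- apply: submx_trans (le_relimg_relIm leY) _.
  apply: submx_trans (hinge_Im_Indef hP jj' j'P) _.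
  exact: relimg_le_relIndef imY'.
- have /mxrankS : (Y' <= Y)%MS.
    apply: submx_trans (le_relimg_relIm leY') _.
    apply: submx_trans (hinge_Im_Indef hP j'j jP) _.
    exact: relimg_le_relIndef imY.
  by rewrite leqNgt rYY'.
- apply/row_subP => i; have [w wX wP] := leY i.
  exact: imY' (submx_trans wX XX') wP.
Qed.

End Hinges.

Section HingeGenerator.
Variables (K : fieldType) (n : nat) (x0 : 'I_n) (nu : seq nat).
Variables (A : MatTuple K n) (Ps : seq 'M[K]_(n + n)) (g : 'M[K]_n).
Hypothesis hingePs : hinge K n Ps.
Hypothesis APs : forall m : nat, (m <= n)%N ->
  exists (c : K) (j : nat) (L : {set 'I_n} -> {set 'I_n} -> K),
    [/\ (j < size Ps)%N, is_lambda K n (relj K n Ps j) L, nonzero_deg K n m L &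
        forall S T : {set 'I_n}, #|S| = m -> #|T| = m -> A m S T = c * L S T].

Local Notation P j := (relj K n Ps j).

Definition first_cols d : 'M[K]_(d, n) := rowsel x0 d (prefix_set n d) g^T.

Definition factor d (S : {set 'I_n}) : K :=
  \sum_T A d S T * wedge K n g^T (prefix_set n d) T.

Definition factor_data d (k : K) (Y : 'M[K]_(d, n)) (j : nat) : Prop :=
  [/\ forall S : {set 'I_n}, #|S| = d -> factor d S = k * plucker x0 Y S,
      \rank Y = d, (j < size Ps)%N,
      relimg_le (P j) (first_cols d) Y & le_relimg (P j) (first_cols d) Y].

Lemma factor_lambda d : (d <= n)%N ->
  exists (c : K) (j : nat) (L : {set 'I_n} -> {set 'I_n} -> K),
    [/\ (j < size Ps)%N, is_lambda K n (P j) L &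
        forall S : {set 'I_n}, #|S| = d ->
          factor d S = c * \sum_T L S T * plucker x0 (first_cols d) T].
Proof.
move=> dn; have [c [j [L [jP lamL _ AL]]]] := APs dn.
exists c, j, L; split => // S hS; rewrite /factor big_distrr; apply: eq_bigr => T _ /=.
rewrite (wedge_plucker x0 _ _ (card_prefix_set dn)).
have [hT|hT] := eqVneq #|T| d; first by rewrite AL // mulrA.
by rewrite /plucker (negPf hT) !mulr0.
Qed.

Lemma factor_decomposable d : (d <= n)%N ->
  (forall S : {set 'I_n}, #|S| = d -> factor d S = 0) \/
  exists k (Y : 'M[K]_(d, n)) j, factor_data k Y j.
Proof.
move=> dn; have [c [j [L [jP lamL hfac]]]] := factor_lambda dn.
case: (lambda_plucker x0 (first_cols d) lamL) => [z|[k [Y [hY rY imY leY]]]].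
  by left => S hS; rewrite hfac // z mulr0.
by right; exists (c * k), Y, j; split => // S hS; rewrite hfac // hY mulrA.
Qed.

Lemma factors_wedge (D : pred nat) :
  (forall d, D d -> (d <= n)%N) ->
  (forall d, D d -> exists k (Y : 'M[K]_(d, n)) j, factor_data k Y j) ->
  exists2 U : 'M[K]_n, U \in unitmx &
    forall d, D d -> exists q, forall S : {set 'I_n}, #|S| = d ->
      factor d S = q * wedge K n U (prefix_set n d) S.
Proof.
move=> Dn Ddata.
(* Choosing square matrices [<<Y>>] avoids a type depending on the degree. *)
have /fin_all_exists [f hf] : forall d : 'I_n.+1,
  exists r : K * 'M[K]_n * nat, D d ->
    exists2 Y : 'M[K]_(d, n), (r.1.2 :=: Y)%MS & factor_data r.1.1 Y r.2.
  move=> d; have [Dd|_] := boolP (D d); last by exists (0, 0, 0%N).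
  have [k [Y [j hY]]] := Ddata d Dd.
  by exists (k, <<Y>>%MS, j) => _; exists Y => //; apply: genmxE.
pose F d := f (inord d).
have hF d : D d -> exists2 Y : 'M[K]_(d, n), ((F d).1.2 :=: Y)%MS &
    factor_data (F d).1.1 Y (F d).2.
  by move=> Dd; have := hf (inord d); rewrite /F inordK ?ltnS ?Dn //; apply.
have rankF d : D d -> \rank (F d).1.2 = d.
  by move=> Dd; have [Y -> [_ ->]] := hF d Dd.
have nestF d d' : D d -> D d' -> (d < d')%N -> ((F d).1.2 <= (F d').1.2)%MS.
  move=> Dd Dd' dd'; have [Y -> [_ rY jP imY leY]] := hF d Dd.
  have [Y' -> [_ rY' j'P imY' leY']] := hF d' Dd'.
  apply: (hinge_relimg_nested hingePs jP j'P _ _ imY leY imY' leY').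
    by apply: rowsel_prefix_sub; rewrite ltnW // Dn.
  by rewrite rY rY'.
have [U Uu UF] := exists_flag_basis rankF nestF.
exists U => // d Dd; have [Y YF [hY _ _ _ _]] := hF d Dd.
have /submxP [Q YQ] : (Y <= rowsel x0 d (prefix_set n d) U)%MS.
  by rewrite -YF; apply: submx_trans (UF d Dd) (pid_rowsel_prefix _ _ (Dn d Dd)).
exists ((F d).1.1 * \det Q) => S hS.
by rewrite hY // YQ plucker_mull (wedge_plucker x0 U S (card_prefix_set (Dn d Dd))) mulrA.
Qed.

Lemma rnu_Hgen_hinge : exists c u, u \in unitmx /\
  forall I, rnu K n nu A (Hgen K n nu g) I = c * Hgen K n nu u I.
Proof.
pose s := size (degs n nu).
have rnuE I : rnu K n nu A (Hgen K n nu g) I =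
    \prod_(t < s) factor (nth 0%N (degs n nu) t) (val I t) by rewrite rnu_Hgen.
have cardI (I : TIdx n nu) (t : 'I_s) : #|val I t| = nth 0%N (degs n nu) t.
  by move/forallP: (valP I) => /(_ t) /eqP.
have [/existsP [t /forallP zt]|nz] := boolP [exists t : 'I_s,
    [forall S : {set 'I_n}, (#|S| == nth 0%N (degs n nu) t) ==>
                            (factor (nth 0%N (degs n nu) t) S == 0)]].
  exists 0, 1%:M; split => [|I]; first exact: unitmx1.
  by rewrite mul0r rnuE (bigD1 t) //= (eqP (implyP (zt _) _)) ?mul0r ?cardI.
have degs_n d : d \in degs n nu -> (d <= n)%N by case/mem_degs/andP.
have data d : d \in degs n nu -> exists k (Y : 'M[K]_(d, n)) j, factor_data k Y j.
  move=> dd; case: (factor_decomposable (degs_n d dd)) => // z.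
  case/negP: nz; apply/existsP.
  have ti : (index d (degs n nu) < s)%N by rewrite index_mem.
  exists (Ordinal ti); apply/forallP => S; apply/implyP.
  by rewrite /= nth_index // => /eqP hS; rewrite z.
have [U Uu hU] := factors_wedge degs_n data.
have /fin_all_exists [q hq] : forall t : 'I_s, exists q, forall S : {set 'I_n},
    #|S| = nth 0%N (degs n nu) t -> factor (nth 0%N (degs n nu) t) S =
      q * wedge K n U (prefix_set n (nth 0%N (degs n nu) t)) S.
  by move=> t; apply: hU; apply: mem_nth.
exists (\prod_(t < s) q t), U^T; split => [|I]; first by rewrite unitmx_tr.
rewrite rnuE Hgen_prod trmxK -big_split /=; apply: eq_bigr => t _.
exact: hq (cardI I t).
Qed.

End HingeGenerator.

Lemma rnu_Hgen_line (K : fieldType) n nu (A : MatTuple K n) (g : 'M[K]_n) :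
  inHingeT K n A -> exists c u, u \in unitmx /\
    forall I, rnu K n nu A (Hgen K n nu g) I = c * Hgen K n nu u I.
Proof.
case: n A g => [|n] A g [Ps [hingePs APs]].
  exists 1, 1%:M; split => [|I]; first exact: unitmx1.
  by rewrite rnu_Hgen Hgen_prod mul1r !big1 //; case.
exact: (@rnu_Hgen_hinge K n.+1 ord0 nu A Ps g hingePs APs).
Qed.

Lemma rnu_lincomb (K : fieldType) n nu (A : MatTuple K n) m (cs : 'I_m -> K)
    (xs : 'I_m -> TIdx n nu -> K) (x : TIdx n nu -> K) :
  (forall J, x J = \sum_(i < m) cs i * xs i J) ->
  forall I, rnu K n nu A x I = \sum_(i < m) cs i * rnu K n nu A (xs i) I.
Proof.
move=> xE I; rewrite /rnu; under eq_bigr do rewrite xE big_distrr.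
rewrite exchange_big /=; apply: eq_bigr => i _; rewrite big_distrr /=.
by apply: eq_bigr => J _; rewrite mulrCA.
Qed.

Theorem lemma2p13 (R : realType) (n : nat) (nu : seq nat) :
  signature n nu ->
  forall A : MatTuple R[i] n, inHingeT R[i] n A ->
  forall x : TIdx n nu -> R[i], inH R[i] n nu x -> inH R[i] n nu (rnu R[i] n nu A x).
Proof.
move=> _ A hingeA x [m [gs [cs [_ xE]]]].
have /fin_all_exists [p hp] : forall i : 'I_m, exists p : R[i] * 'M[R[i]]_n,
    p.2 \in unitmx /\
    forall I, rnu _ n nu A (Hgen _ n nu (gs i)) I = p.1 * Hgen _ n nu p.2 I.
  by move=> i; have [c [u hu]] := rnu_Hgen_line nu (gs i) hingeA; exists (c, u).
exists m, (fun i => (p i).2), (fun i => cs i * (p i).1); split => [i|I].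
  by case: (hp i).
rewrite (rnu_lincomb _ xE); apply: eq_bigr => i _.
by rewrite (proj2 (hp i)) mulrA.
Qed.
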